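(* Let $\mathbb{B}$ be a finite-dimensional $\mathbb{F}$-subalgebra of $\mathbb{M}_n(K)$ with Jacobson radical $\mathbb{R}$, and suppose $\mathbb{B}=\mathbb{B}'\oplus\mathbb{R}$ for an $\mathbb{F}$-subalgebra $\mathbb{B}'$. Then $\dim_{\mathbb{F}}\mathbb{B}'=\dim_K(K\mathbb{B}')$, and the sum $K\mathbb{B}'+K\mathbb{R}$ is direct.
   Context: $\mathbb{F}$ is a finite field and $K$ is the function field of a smooth projective irreducible curve over $\mathbb{F}$, with $\mathbb{F}$ the full field of constants of $K$ (algebraically closed in $K$). For a subset $S\subseteq\mathbb{M}_n(K)$, $KS$ denotes its $K$-linear span. *)

From HB Require Import structures.
From mathcomp Require Import all_boot all_order all_algebra all_field.
Set Implicit Arguments. Unset Strict Implicit. Unset Printing Implicit Defensive.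
Import GRing.Theory.
Local Open Scope ring_scope.

Section Defs.
Variables (F : finFieldType) (K : fieldType) (f : {rmorphism F -> K}).

Definition transcendental_over (t : K) :=
  forall p : {poly F}, p != 0 -> (map_poly f p).[t] != 0.

Definition algebraic_over (x : K) :=
  exists2 p : {poly F}, p != 0 & (map_poly f p).[x] = 0.

(* K is a function field in one variable over F: there is t transcendental
   over F such that K is a finite-dimensional F(t)-vector space (spanned by
   finitely many e_i over F(t)). *)
Definition function_field_one_var :=
  exists t : K, transcendental_over t /\
    exists (m : nat) (e : 'I_m -> K), forall x : K,
      exists (p q : 'I_m -> {poly F}), (forall i, q i != 0) /\
        x = \sum_(i < m) ((map_poly f (p i)).[t] / (map_poly f (q i)).[t]) * e i.

Definition full_constant_field :=
  forall x : K, algebraic_over x -> exists c : F, x = f c.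

Variable n : nat.
Definition mset := 'M[K]_n -> Prop.

Definition F_span (s : seq 'M[K]_n) : mset := fun A =>
  exists c : 'I_(size s) -> F, A = \sum_(i < size s) f (c i) *: s`_i.

Definition F_free (s : seq 'M[K]_n) :=
  forall c : 'I_(size s) -> F,
    \sum_(i < size s) f (c i) *: s`_i = 0 -> forall i, c i = 0.

Definition F_dim_is (S : mset) (d : nat) :=
  exists s : seq 'M[K]_n, [/\ size s = d, F_free s & forall A, S A <-> F_span s A].

Definition K_span (S : mset) : mset := fun A =>
  exists (m : nat) (c : 'I_m -> K) (v : 'I_m -> 'M[K]_n),
    (forall i, S (v i)) /\ A = \sum_(i < m) c i *: v i.

Definition K_free (s : seq 'M[K]_n) :=
  forall c : 'I_(size s) -> K,
    \sum_(i < size s) c i *: s`_i = 0 -> forall i, c i = 0.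

Definition K_spanned (s : seq 'M[K]_n) : mset := fun A =>
  exists c : 'I_(size s) -> K, A = \sum_(i < size s) c i *: s`_i.

Definition K_dim_is (S : mset) (d : nat) :=
  exists s : seq 'M[K]_n, [/\ size s = d, K_free s & forall A, S A <-> K_spanned s A].

Definition F_subspace (S : mset) :=
  [/\ S 0, (forall A B, S A -> S B -> S (A + B)) & (forall c A, S A -> S (f c *: A))].

(* F-subalgebra of M_n(K) (not required to contain the identity) *)
Definition F_subalgebra (S : mset) :=
  F_subspace S /\ (forall A B, S A -> S B -> S (A *m B)).

Definition two_sided_ideal (B I : mset) :=
  [/\ F_subspace I, (forall A, I A -> B A),
      (forall A X, B A -> I X -> I (A *m X)) & (forall A X, B A -> I X -> I (X *m A))].

Definition nilpotent_set (I : mset) :=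
  exists k : nat, forall v : 'I_k.+1 -> 'M[K]_n, (forall i, I (v i)) ->
    foldr (fun A P => A *m P) 1%:M [seq v i | i <- enum 'I_k.+1] = 0.

(* Jacobson radical of a finite-dimensional algebra B: its largest nilpotent
   two-sided ideal. *)
Definition jacobson_radical (B R : mset) :=
  [/\ two_sided_ideal B R, nilpotent_set R &
      forall I, two_sided_ideal B I -> nilpotent_set I -> forall A, I A -> R A].

End Defs.

(* Fix an F-basis of B'. It identifies B' with F^m, multiplied through F-rational
   structure constants, and B' (x)_F K with K^m carrying the same constants; taking
   the combination of the basis with given coordinates is a K-algebra morphism onto
   K B'. The coordinate vectors mapped into K R form an ideal P of B' (x) K with no
   nonzero F-rational vector, because B' :&: K R is a nilpotent ideal of B', hence
   contained in B' :&: R = 0. Both claims follow once such an ideal P is shown to be 0.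
   Let q = #|F| and let ^q be the Frobenius of K, which fixes exactly F since F is
   algebraically closed in K. Galois descent: a nonzero subspace U with U^q <= U
   contains a nonzero rational vector. Hence B' (x) K has no nonzero nilpotent ideal
   (enlarge it to U + U^q until it is stable), and distinct minimal ideals are
   independent. If P <> 0, pick minimal ideals N_0 <= P and N_(i+1) <= N_i^q; two of
   them coincide, pulling back the coincidence gives N_0 <= N_0^(q^d) for some d > 0,
   and descent yields a rational vector in N_0 <= P. *)

From HB Require Import structures.
From mathcomp Require Import all_boot all_order all_algebra all_field all_fingroup all_solvable.
From mathcomp Require Import zify.
From Stdlib Require Import Classical ClassicalEpsilon.
Set Implicit Arguments. Unset Strict Implicit. Unset Printing Implicit Defensive.
Import GRing.Theory.
Local Open Scope ring_scope.

(** * Nilpotence of sums and spans *)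

Section VanishingProducts.
Variables (R : pzRingType) (V : lmodType R) (mul : V -> V -> V).
Hypotheses (mulDl : left_distributive mul +%R) (mulDr : right_distributive mul +%R).

Lemma biadd_mul0l x : mul 0 x = 0.
Proof. by apply: (addrI (mul 0 x)); rewrite -mulDl !addr0. Qed.

Lemma biadd_mul0r x : mul x 0 = 0.
Proof. by apply: (addrI (mul x 0)); rewrite -mulDr !addr0. Qed.

Lemma biadd_mul_suml I (r : seq I) (P : pred I) (G : I -> V) y :
  mul (\sum_(i <- r | P i) G i) y = \sum_(i <- r | P i) mul (G i) y.
Proof. by elim/big_rec2: _ => [|i a b _ <-]; rewrite ?biadd_mul0l ?mulDl. Qed.

Lemma biadd_mul_sumr I (r : seq I) (P : pred I) (G : I -> V) y :
  mul y (\sum_(i <- r | P i) G i) = \sum_(i <- r | P i) mul y (G i).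
Proof. by elim/big_rec2: _ => [|i a b _ <-]; rewrite ?biadd_mul0r ?mulDr. Qed.

(* [foldr mul z [:: x1; ...; xk]] is the product [x1 * (... * (xk * z))] of
   k + 1 factors. *)
Definition vanishing_products (S : V -> Prop) k := forall z l, size l = k -> S z ->
  (forall x, x \in l -> S x) -> foldr mul z l = 0.

Definition sum_set (I J : V -> Prop) x := exists a b, [/\ I a, J b & x = a + b].

Definition span_set (G : V -> Prop) x := exists t (a : 'I_t -> R) (g : 'I_t -> V),
  (forall i, G (g i)) /\ x = \sum_(i < t) a i *: g i.

Section SumWithIdeal.
Hypothesis mulA : associative mul.
Variables (S I J : V -> Prop).
Hypotheses (Smul : forall x y, S x -> S y -> S (mul x y))
  (IS : forall x, I x -> S x) (JS : forall x, J x -> S x)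
  (JD : forall x y, J x -> J y -> J (x + y))
  (JMl : forall s x, S s -> J x -> J (mul s x))
  (JMr : forall s x, S s -> J x -> J (mul x s)).

Lemma foldr_mulA y w l : foldr mul (mul y w) l = mul (foldr mul y l) w.
Proof. by elim: l => //= x l ->; rewrite mulA. Qed.

Lemma foldr_closed z l : S z -> (forall x, x \in l -> S x) -> S (foldr mul z l).
Proof.
move=> Sz; elim: l => //= x l IH Sl.
apply: Smul; first by apply: Sl; rewrite mem_head.
by apply: IH => y yl; apply: Sl; rewrite inE yl orbT.
Qed.

(* Expanding a product of elements of I + J: all terms but one contain a factor in J. *)
Lemma foldr_sum_set z l : sum_set I J z -> (forall x, x \in l -> sum_set I J x) ->
  exists zI lI r, [/\ I zI, (forall x, x \in lI -> I x), size lI = size l, J r &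
     foldr mul z l = foldr mul zI lI + r].
Proof.
move=> [a [b [Ia Jb ->]]]; elim: l => [|x l IH] Hl /=.
  by exists a, [::], b; split => // x; rewrite in_nil.
have [|zI [lI [r [IzI IlI slI Jr ->]]]] := IH.
  by move=> y yl; apply: Hl; rewrite inE yl orbT.
have [c [d [Ic Jd ->]]] := Hl x (mem_head _ _).
have SlI : S (foldr mul zI lI) by apply: foldr_closed (IS IzI) _ => y /IlI /IS.
exists zI, (c :: lI), (mul c r + mul d (foldr mul zI lI) + mul d r); split => //=.
- by move=> y; rewrite inE => /orP[/eqP->|/IlI].
- by rewrite slI.
- by apply: JD; [apply: JD; [apply: JMl (IS Ic) Jr | apply: JMr] | apply: JMl (JS Jd) Jr].
by rewrite mulDl !mulDr !addrA.
Qed.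

Variables (k1 k2 : nat).
Hypotheses (nI : vanishing_products I k1) (nJ : vanishing_products J k2).

Lemma foldr_sum_set_block z l : size l = k1 -> sum_set I J z ->
  (forall x, x \in l -> sum_set I J x) -> J (foldr mul z l).
Proof.
move=> sl Sz Sl; have [zI [lI [r [IzI IlI slI Jr ->]]]] := foldr_sum_set Sz Sl.
by rewrite nI ?add0r // slI.
Qed.

Lemma foldr_sum_set_blocks t z l : size l = (k1 + t * k1.+1)%N -> sum_set I J z ->
  (forall x, x \in l -> sum_set I J x) ->
  exists zJ lJ, [/\ J zJ, (forall x, x \in lJ -> J x), size lJ = t &
    foldr mul z l = foldr mul zJ lJ].
Proof.
elim: t z l => [|t IH] z l sl Sz Sl.
  exists (foldr mul z l), [::]; split => //.
  by apply: foldr_sum_set_block => //; rewrite sl mul0n addn0.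
have sdrop : size (drop k1.+1 l) = (k1 + t * k1.+1)%N.
  by rewrite size_drop sl mulSn addnCA addKn.
have [zJ [lJ [JzJ JlJ slJ E]]] := IH z _ sdrop Sz (fun x xl => Sl x (mem_drop xl)).
rewrite -(cat_take_drop k1.+1 l) foldr_cat E.
have : size (take k1.+1 l) = k1.+1 by rewrite size_takel // sl mulSn; lia.
move: (fun x (xl : x \in take k1.+1 l) => Sl x (mem_take xl)).
case/lastP: (take k1.+1 l) => // l1 y Sl1; rewrite size_rcons => -[sl1].
rewrite foldr_rcons foldr_mulA.
exists zJ, (foldr mul y l1 :: lJ); split => //=; last by rewrite slJ.
move=> x; rewrite inE => /orP[/eqP->|/JlJ//].
apply: foldr_sum_set_block => //; first by apply: Sl1; rewrite mem_rcons mem_head.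
by move=> w wl; apply: Sl1; rewrite mem_rcons inE wl orbT.
Qed.

Lemma vanishing_products_sum_set :
  vanishing_products (sum_set I J) (k1 + k2 * k1.+1)%N.
Proof.
move=> z l sl Sz Sl; have [zJ [lJ [JzJ JlJ slJ ->]]] := foldr_sum_set_blocks sl Sz Sl.
exact: nJ.
Qed.

End SumWithIdeal.

Hypotheses (mulZl : forall a x y, mul (a *: x) y = a *: mul x y)
  (mulZr : forall a x y, mul x (a *: y) = a *: mul x y).

Lemma foldr_linear_mid z l1 l2 t (a : 'I_t -> R) (g : 'I_t -> V) :
  foldr mul z (l1 ++ (\sum_(i < t) a i *: g i) :: l2) =
  \sum_(i < t) a i *: foldr mul z (l1 ++ g i :: l2).
Proof.
elim: l1 => [|x l1 IH] /=.
  by rewrite biadd_mul_suml; apply: eq_bigr => i _; rewrite mulZl.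
by rewrite IH biadd_mul_sumr; apply: eq_bigr => i _; rewrite mulZr.
Qed.

Lemma foldr_linear_last l t (a : 'I_t -> R) (g : 'I_t -> V) :
  foldr mul (\sum_(i < t) a i *: g i) l = \sum_(i < t) a i *: foldr mul (g i) l.
Proof.
elim: l => [|x l IH] //=.
by rewrite IH biadd_mul_sumr; apply: eq_bigr => i _; rewrite mulZr.
Qed.

Lemma vanishing_products_span G k :
  vanishing_products G k -> vanishing_products (span_set G) k.
Proof.
move=> nG.
suff H l2 l1 z : (size l1 + size l2)%N = k -> (forall x, x \in l1 -> G x) ->
   (forall x, x \in l2 -> span_set G x) -> span_set G z -> foldr mul z (l1 ++ l2) = 0.
  by move=> z l sl Sz Sl; exact: (H l [::] z).
elim: l2 l1 z => [|x l2 IH] l1 z sl Gl1 Sl2 [t [a [g [Gg ->]]]].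
  rewrite cats0 foldr_linear_last big1 // => i _.
  by rewrite nG ?scaler0 // -sl addn0.
have [t' [a' [g' [Gg' ->]]]] := Sl2 x (mem_head _ _).
rewrite foldr_linear_mid big1 // => i _.
rewrite -cat_rcons IH ?scaler0 //.
- by rewrite size_rcons addSnnS.
- by move=> w; rewrite mem_rcons inE => /orP[/eqP->|/Gl1].
- by move=> w wl; apply: Sl2; rewrite inE wl orbT.
by exists t, a, g.
Qed.

End VanishingProducts.

(** * The q-Frobenius and Galois descent *)

Section QFrobenius.
Variables (F : finFieldType) (K : fieldType) (f : {rmorphism F -> K}).

Lemma pnat_pchar_card_exp d : [pchar K].-nat (#|F| ^ d)%N.
Proof.
have [p p_pr pF] := finPcharP F.
rewrite (eq_pnat _ (pcharf_eq (rmorph_pchar f pF))) pnatX.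
have /abelem_pgroup := fin_ring_pchar_abelem pF.
by rewrite /pgroup cardsT => ->.
Qed.

(* The parameter [f] is unused in the body; it records that K has the characteristic
   of F, which is what makes [qfrob f d] additive. *)
Definition qfrob of {rmorphism F -> K} := fun d (x : K) => x ^+ (#|F| ^ d)%N.

Lemma qfrob_is_nmod_morphism d : nmod_morphism (qfrob f d).
Proof.
split=> [|x y]; last by rewrite /qfrob exprDn_pchar // pnat_pchar_card_exp.
by rewrite /qfrob expr0n expn_eq0 eqn0Ngt (ltnW (finNzRing_gt1 F)).
Qed.

Lemma qfrob_is_monoid_morphism d : monoid_morphism (qfrob f d).
Proof. by split=> [|x y]; rewrite /qfrob ?expr1n ?exprMn. Qed.

HB.instance Definition _ d :=
  GRing.isNmodMorphism.Build K K (qfrob f d) (qfrob_is_nmod_morphism d).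
HB.instance Definition _ d :=
  GRing.isMonoidMorphism.Build K K (qfrob f d) (qfrob_is_monoid_morphism d).

Lemma qfrob0 x : qfrob f 0 x = x.
Proof. by rewrite /qfrob expn0 expr1. Qed.

Lemma qfrob_comp a b x : qfrob f a (qfrob f b x) = qfrob f (a + b) x.
Proof. by rewrite /qfrob -exprM -expnD addnC. Qed.

Lemma qfrob_const d c : qfrob f d (f c) = f c.
Proof.
rewrite /qfrob -rmorphXn; congr (f _).
by elim: d => [|d IH]; rewrite ?expr1 // expnS mulnC exprM IH expf_card.
Qed.

(* A fixed point of [qfrob f d] is a root of X^(q^d) - X, hence algebraic over F. *)
Lemma qfrob_fixed_const d x : full_constant_field f -> (0 < d)%N ->
  qfrob f d x = x -> exists c, x = f c.
Proof.
move=> hconst d_gt0 fixx; apply: hconst; exists ('X^(#|F| ^ d) - 'X).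
  have q_gt1 : (1 < #|F| ^ d)%N.
    by rewrite -(exp1n d) ltn_exp2r -?lt0n // finNzRing_gt1.
  by rewrite -size_poly_eq0 size_polyDl ?size_polyXn ?size_polyN ?size_polyX.
by rewrite rmorphB /= map_polyXn map_polyX !hornerE -/(qfrob f d x) fixx subrr.
Qed.

End QFrobenius.

Lemma rV_neq0_entry (L : fieldType) k (x : 'rV[L]_k) : x != 0 -> exists i, x 0 i != 0.
Proof.
move=> x0; apply/existsP; apply: contraNT x0 => /existsPn x0'.
by apply/eqP/rowP => j; rewrite mxE; exact/eqP/negPn/x0'.
Qed.

Section FrobeniusDescent.
Variables (F : finFieldType) (K : fieldType) (f : {rmorphism F -> K}).
Hypothesis hconst : full_constant_field f.
Variables (d m : nat).
Hypothesis d_gt0 : (0 < d)%N.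
Local Notation frob := (map_mx (qfrob f d)).
Local Notation support x := [set j | x 0 j != 0].

Lemma frob_fixed_rational (x : 'rV[K]_m) : frob x = x -> exists c, x = map_mx f c.
Proof.
move=> fx; have cj j : exists c, x 0 j == f c.
  have [c ->] : exists c, x 0 j = f c.
    by apply: qfrob_fixed_const hconst d_gt0 _; rewrite -{2}fx mxE.
  by exists c.
exists (\row_j xchoose (cj j)); apply/rowP => j.
by rewrite !mxE; exact/eqP/(xchooseP (cj j)).
Qed.

(* Galois descent: a nonzero vector of U with minimal support, normalised to have a
   coordinate 1, differs from its Frobenius image by a vector of smaller support. *)
Lemma frob_stable_rational (U : 'M[K]_m) : (frob U <= U)%MS -> U != 0 ->
  exists2 c : 'rV[F]_m, c != 0 & (map_mx f c <= U)%MS.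
Proof.
move=> sU /rowV0Pn [u uU u_neq0].
suff supp_ind k (x : 'rV[K]_m) : (#|support x| < k)%N -> (x <= U)%MS -> x != 0 ->
    exists2 c : 'rV[F]_m, c != 0 & (map_mx f c <= U)%MS.
  exact: supp_ind (ltnSn _) uU u_neq0.
elim: k x => // k IH x supp_x xU x0.
have [i xi] := rV_neq0_entry x0.
pose x' := (x 0 i)^-1 *: x; pose y := frob x' - x'.
have x'U : (x' <= U)%MS by rewrite scalemx_sub.
have x'i : x' 0 i = 1 by rewrite mxE mulVf.
have yE j : y 0 j = qfrob f d (x' 0 j) - x' 0 j by rewrite !mxE.
have [y0|y_neq0] := eqVneq y 0.
  have [c Ec] : exists c, x' = map_mx f c.
    by apply: frob_fixed_rational; apply/eqP; rewrite -subr_eq0 -/y y0.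
  exists c; last by rewrite -Ec.
  by apply: contra_neq (oner_neq0 K) => c0; rewrite -x'i Ec c0 map_mx0 mxE.
have yU : (y <= U)%MS.
  apply: addmx_sub; last by rewrite -scaleN1r scalemx_sub.
  by apply: submx_trans sU; rewrite map_submx.
apply: (IH y) yU y_neq0; rewrite -ltnS; apply: leq_trans supp_x.
apply: proper_card; apply/properP; split.
  apply/subsetP => j; rewrite !inE; apply: contraNneq => xj.
  have x'j : x' 0 j = 0 by rewrite mxE xj mulr0.
  by rewrite yE x'j rmorph0 subrr.
by exists i; rewrite !inE // yE x'i rmorph1 subrr eqxx.
Qed.

End FrobeniusDescent.

(** * Ideals of an F-algebra extended to K, in coordinates *)

Section StructureConstants.
Variables (R : comNzRingType) (m : nat) (h : 'I_m -> 'I_m -> 'rV[R]_m).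

(* The product on R^m whose structure constants are [e_i * e_j = h i j]. *)
Definition scmul (x y : 'rV[R]_m) : 'rV[R]_m := \sum_i \sum_j (x 0 i * y 0 j) *: h i j.

Lemma scmulDl : left_distributive scmul +%R.
Proof.
move=> x y z; rewrite /scmul -big_split; apply: eq_bigr => i _.
by rewrite -big_split; apply: eq_bigr => j _; rewrite !mxE mulrDl scalerDl.
Qed.

Lemma scmulDr : right_distributive scmul +%R.
Proof.
move=> x y z; rewrite /scmul -big_split; apply: eq_bigr => i _.
by rewrite -big_split; apply: eq_bigr => j _; rewrite !mxE mulrDr scalerDl.
Qed.

Lemma scmulZl a x y : scmul (a *: x) y = a *: scmul x y.
Proof.
rewrite /scmul scaler_sumr; apply: eq_bigr => i _; rewrite scaler_sumr.
by apply: eq_bigr => j _; rewrite !mxE scalerA mulrA.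
Qed.

Lemma scmulZr a x y : scmul x (a *: y) = a *: scmul x y.
Proof.
rewrite /scmul scaler_sumr; apply: eq_bigr => i _; rewrite scaler_sumr.
by apply: eq_bigr => j _; rewrite !mxE scalerA mulrCA.
Qed.

Lemma scmul_suml t (a : 'I_t -> R) (v : 'I_t -> 'rV_m) y :
  scmul (\sum_k a k *: v k) y = \sum_k a k *: scmul (v k) y.
Proof. by rewrite (biadd_mul_suml scmulDl); apply: eq_bigr => k _; rewrite scmulZl. Qed.

Lemma scmul_sumr t (a : 'I_t -> R) (v : 'I_t -> 'rV_m) y :
  scmul y (\sum_k a k *: v k) = \sum_k a k *: scmul y (v k).
Proof. by rewrite (biadd_mul_sumr scmulDr); apply: eq_bigr => k _; rewrite scmulZr. Qed.

Lemma scmulA_delta :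
  (forall i j k, scmul (delta_mx 0 i) (scmul (delta_mx 0 j) (delta_mx 0 k)) =
                 scmul (scmul (delta_mx 0 i) (delta_mx 0 j)) (delta_mx 0 k)) ->
  associative scmul.
Proof.
move=> Ae.
have Aee i j z : scmul (delta_mx 0 i) (scmul (delta_mx 0 j) z) =
                 scmul (scmul (delta_mx 0 i) (delta_mx 0 j)) z.
  by rewrite (row_sum_delta z) !scmul_sumr; apply: eq_bigr => k _; rewrite Ae.
have Ae_ i y z : scmul (delta_mx 0 i) (scmul y z) = scmul (scmul (delta_mx 0 i) y) z.
  rewrite (row_sum_delta y) scmul_suml !scmul_sumr scmul_suml.
  by apply: eq_bigr => j _; rewrite Aee.
move=> x y z; rewrite (row_sum_delta x) !scmul_suml.
by apply: eq_bigr => i _; rewrite Ae_.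
Qed.

End StructureConstants.

Lemma map_scmul (R S : comNzRingType) (g : {rmorphism R -> S}) m h (x y : 'rV[R]_m) :
  map_mx g (scmul h x y) = scmul (fun i j => map_mx g (h i j)) (map_mx g x) (map_mx g y).
Proof.
rewrite /scmul map_mx_sum; apply: eq_bigr => i _; rewrite map_mx_sum.
by apply: eq_bigr => j _; rewrite map_mxZ rmorphM !mxE.
Qed.

Lemma seq_preimage (T1 T2 : eqType) (h : T1 -> T2) (P : T1 -> Prop) (l : seq T2) :
  (forall x, x \in l -> exists2 y, P y & x = h y) ->
  exists2 l', (forall y, y \in l' -> P y) & l = map h l'.
Proof.
elim: l => [|x l IH] Hl; first by exists [::].
have [y Py ->] := Hl x (mem_head _ _).
have [|l' Pl' ->] := IH; first by move=> z zl; apply: Hl; rewrite inE zl orbT.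
by exists (y :: l') => // z; rewrite inE => /orP[/eqP->|/Pl'].
Qed.

Lemma submx_span_rows (L : fieldType) k (U : 'M[L]_k) x :
  (x <= U)%MS -> span_set (fun y => exists i, y = row i U) x.
Proof.
move=> /submxP [u ->]; rewrite mulmx_sum_row.
by exists k, (fun i => u 0 i), (fun i => row i U); split=> // i; exists i.
Qed.

Section ScalarExtension.
Variables (F : finFieldType) (K : fieldType) (f : {rmorphism F -> K}) (m : nat)
  (g : 'I_m -> 'I_m -> 'rV[F]_m).
Hypothesis gA : associative (scmul g).
Local Notation mulK := (scmul (fun i j => map_mx f (g i j))).
Local Notation frob d := (map_mx (qfrob f d)).
Local Notation e i := (delta_mx 0 i : 'rV[K]_m).

Lemma scmulKA : associative mulK.
Proof.
apply: scmulA_delta => i j k.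
by rewrite -!(map_delta_mx f) -!map_scmul gA.
Qed.

Lemma frob_scmul d x y : frob d (mulK x y) = mulK (frob d x) (frob d y).
Proof.
rewrite map_scmul /scmul; apply: eq_bigr => i _; apply: eq_bigr => j _.
by congr (_ *: _); apply/rowP => l; rewrite !mxE; apply: qfrob_const.
Qed.

Lemma frob_foldr d z l : frob d (foldr mulK z l) = foldr mulK (frob d z) (map (frob d) l).
Proof. by elim: l => //= x l <-; rewrite frob_scmul. Qed.

(* Subspaces of K^m are represented by the row spaces of square matrices. *)
Definition sc_ideal (U : 'M[K]_m) :=
  forall x y, (x <= U)%MS -> (mulK y x <= U)%MS /\ (mulK x y <= U)%MS.

Definition sc_nilpotent (U : 'M[K]_m) :=
  exists k, vanishing_products mulK (fun x => (x <= U)%MS) k.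

Lemma sc_ideal_rows (U : 'M[K]_m) :
  (forall i l, (mulK (e i) (row l U) <= U)%MS /\ (mulK (row l U) (e i) <= U)%MS) ->
  sc_ideal U.
Proof.
move=> Ue x y /submxP [u ->]; rewrite mulmx_sum_row (row_sum_delta y); split.
  rewrite scmul_sumr; apply: summx_sub => l _; apply: scalemx_sub.
  rewrite scmul_suml; apply: summx_sub => i _; apply: scalemx_sub; exact: (Ue i l).1.
rewrite scmul_suml; apply: summx_sub => l _; apply: scalemx_sub.
rewrite scmul_sumr; apply: summx_sub => i _; apply: scalemx_sub; exact: (Ue i l).2.
Qed.

Lemma frob_ideal d (U : 'M[K]_m) : sc_ideal U -> sc_ideal (frob d U).
Proof.
move=> iU; apply: sc_ideal_rows => i l; rewrite -map_row -(map_delta_mx (qfrob f d)).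
by rewrite -!frob_scmul !map_submx; apply: iU; exact: row_sub.
Qed.

Lemma sc_nilpotent_rows (U : 'M[K]_m) k :
  vanishing_products mulK (fun y => exists i, y = row i U) k ->
  vanishing_products mulK (fun x => (x <= U)%MS) k.
Proof.
move=> nU z l sl zU lU.
apply: (vanishing_products_span (@scmulDl _ _ _) (@scmulDr _ _ _) (@scmulZl _ _ _)
  (@scmulZr _ _ _) nU sl (submx_span_rows zU)) => x /lU; exact: submx_span_rows.
Qed.

Lemma frob_nilpotent d (U : 'M[K]_m) : sc_nilpotent U -> sc_nilpotent (frob d U).
Proof.
move=> [k nU]; exists k; apply: sc_nilpotent_rows => z l sl [i ->] lU.
have [l' l'U El] : exists2 l', (forall y, y \in l' -> (y <= U)%MS) & l = map (frob d) l'.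
  by apply: seq_preimage => x /lU [j ->]; exists (row j U); rewrite ?row_sub ?map_row.
have sl' : size l' = k by rewrite -sl El size_map.
by rewrite El -map_row -frob_foldr nU ?map_mx0 ?row_sub.
Qed.

Lemma frob_comp a b (A : 'M[K]_m) : frob a (frob b A) = frob (a + b) A.
Proof. by apply/matrixP => r s; rewrite !mxE qfrob_comp. Qed.

Lemma sc_ideal_adds U V : sc_ideal U -> sc_ideal V -> sc_ideal (U + V)%MS.
Proof.
move=> iU iV x y /sub_addsmxP [u ->].
have [Uyx Uxy] := iU _ y (submxMl u.1 U); have [Vyx Vxy] := iV _ y (submxMl u.2 V).
by rewrite scmulDr scmulDl; split; apply: addmx_sub_adds.
Qed.

Lemma sc_ideal_cap U V : sc_ideal U -> sc_ideal V -> sc_ideal (U :&: V)%MS.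
Proof.
move=> iU iV x y; rewrite sub_capmx => /andP [xU xV].
have [Uyx Uxy] := iU x y xU; have [Vyx Vxy] := iV x y xV.
by rewrite !sub_capmx Uyx Uxy Vyx Vxy.
Qed.

Lemma sc_nilpotent_adds U V : sc_ideal V -> sc_nilpotent U -> sc_nilpotent V ->
  sc_nilpotent (U + V)%MS.
Proof.
move=> iV [k1 nU] [k2 nV]; exists (k1 + k2 * k1.+1)%N.
have nUV := vanishing_products_sum_set (@scmulDl _ _ _) (@scmulDr _ _ _) scmulKA
  (S := fun _ => True) (I := fun x => (x <= U)%MS) (J := fun x => (x <= V)%MS)
  (fun _ _ _ _ => I) (fun _ _ => I) (fun _ _ => I) (fun x y => @addmx_sub _ _ _ _ x y V)
  (fun s x _ xV => (iV x s xV).1) (fun s x _ xV => (iV x s xV).2) nU nV.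
have UV x : (x <= U + V)%MS -> sum_set (fun x => (x <= U)%MS) (fun x => (x <= V)%MS) x.
  by move=> /sub_addsmxP [u ->]; exists (u.1 *m U), (u.2 *m V); rewrite !submxMl.
by move=> z l sl /UV zUV lUV; apply: nUV => // x /lUV /UV.
Qed.

Definition minimal_ideal (M : 'M[K]_m) := [/\ sc_ideal M, M != 0 &
  forall L, sc_ideal L -> L != 0 -> (L <= M)%MS -> (M <= L)%MS].

Lemma exists_minimal_ideal J : sc_ideal J -> J != 0 ->
  exists2 M, minimal_ideal M & (M <= J)%MS.
Proof.
elim: {J}_.+1 {-2}J (ltnSn (\rank J)) => // k IH J rkJ iJ J0.
have [[L [iL L0 LJ JL]]|noL] := classic (exists L,
  [/\ sc_ideal L, L != 0, (L <= J)%MS & ~~ (J <= L)%MS]); last first.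
  exists J => //; split=> // L iL L0 LJ; apply/negPn/negP => JL.
  by apply: noL; exists L.
have [|M minM ML] := IH L _ iL L0; last by exists M => //; apply: submx_trans LJ.
by rewrite -ltnS; apply: leq_trans rkJ; rewrite ltnS (ltn_leqif (mxrank_leqif_sup LJ)).
Qed.

Lemma minimal_ideal_cap M1 M2 : minimal_ideal M1 -> minimal_ideal M2 ->
  ~~ (M1 == M2)%MS -> (M1 :&: M2)%MS = 0.
Proof.
move=> [i1 _ min1] [i2 _ min2] M12; apply/eqP; apply: contraNT M12 => C0.
have iC := sc_ideal_cap i1 i2.
apply/andP; split.
  by apply: submx_trans (min1 _ iC C0 (capmxSl _ _)) (capmxSr _ _).
by apply: submx_trans (min2 _ iC C0 (capmxSr _ _)) (capmxSl _ _).
Qed.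

Lemma frob_minimal_ideal M : minimal_ideal M ->
  exists2 M', minimal_ideal M' & (M' <= frob 1 M)%MS.
Proof.
case=> iM M_neq0 _; apply: exists_minimal_ideal; first exact: frob_ideal.
by rewrite -mxrank_eq0 mxrank_map mxrank_eq0.
Qed.

Lemma minimal_frob_chain M : minimal_ideal M -> exists N : nat -> 'M[K]_m,
  [/\ N 0%N = M, forall i, minimal_ideal (N i) & forall i, (N i.+1 <= frob 1 (N i))%MS].
Proof.
move=> minM.
pose succ (J M' : 'M[K]_m) := minimal_ideal M' /\ (M' <= frob 1 J)%MS.
pose next J := epsilon (inhabits 0) (succ J).
have next_spec J : minimal_ideal J -> succ J (next J).
  by move=> /frob_minimal_ideal [M' ? ?]; apply: epsilon_spec; exists M'.
have minN i : minimal_ideal (iter i next M) by elim: i => //= i /next_spec [].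
by exists (fun i => iter i next M); split=> // i; have [] := next_spec _ (minN i).
Qed.

Section Semiprime.
Hypothesis hconst : full_constant_field f.
Hypothesis nilpotent_irrational : forall N, sc_ideal N -> sc_nilpotent N ->
  forall c : 'rV[F]_m, (map_mx f c <= N)%MS -> c = 0.

Lemma frob_closure U : sc_ideal U -> sc_nilpotent U ->
  exists2 V, [/\ sc_ideal V, sc_nilpotent V & (U <= V)%MS] & (frob 1 V <= V)%MS.
Proof.
elim: {U}_.+1 {-2}U (ltnSn (m - \rank U)) => // k IH U rkU iU nU.
have [sU|nsU] := boolP (frob 1 U <= U)%MS; first by exists U.
have iV : sc_ideal (U + frob 1 U)%MS by apply: sc_ideal_adds => //; exact: frob_ideal.
have nV : sc_nilpotent (U + frob 1 U)%MS.
  by apply: sc_nilpotent_adds; [exact: frob_ideal | | exact: frob_nilpotent].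
have [|V [iV' nV' UV] sV] := IH (U + frob 1 U)%MS _ iV nV.
  have : (U < U + frob 1 U)%MS.
    by rewrite ltmxE addsmxSl; apply: contra nsU; apply: submx_trans (addsmxSr _ _).
  by rewrite ltmxErank => /andP[_]; move: rkU (rank_leq_col (U + frob 1 U)%MS); lia.
by exists V => //; split=> //; apply: submx_trans UV; exact: addsmxSl.
Qed.

Lemma sc_nilpotent_ideal_eq0 U : sc_ideal U -> sc_nilpotent U -> U = 0.
Proof.
move=> iU nU; apply/eqP; apply: contraT => U_neq0.
have [V [iV nV UV] sV] := frob_closure iU nU.
have V_neq0 : V != 0 by apply: contraNneq U_neq0 => V0; rewrite -submx0 -V0.
have [c c_neq0 cV] := frob_stable_rational hconst (ltn0Sn 0) sV V_neq0.
by rewrite (nilpotent_irrational iV nV cV) eqxx in c_neq0.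
Qed.

(* M * M lies in the sum of the M :&: N i = 0, and nilpotent ideals vanish. *)
Lemma minimal_ideal_not_sub_sum t (N : 'I_t -> 'M[K]_m) M : minimal_ideal M ->
  (forall i, minimal_ideal (N i)) -> (forall i, ~~ (M == N i)%MS) ->
  ~~ (M <= \sum_(i < t) N i)%MS.
Proof.
move=> minM minN MN; apply/negP => MsumN.
have [iM M_neq0 _] := minM; suff M0 : M = 0 by rewrite M0 eqxx in M_neq0.
apply: sc_nilpotent_ideal_eq0 => //; exists 1%N => z [|w [|//]] // _ zM wl /=.
have wM : (w <= M)%MS by apply: wl; rewrite mem_head.
have /sub_sumsmxP [u ->] := submx_trans zM MsumN.
rewrite (biadd_mul_sumr (@scmulDr _ _ _)) big1 // => i _; apply/eqP.
have [iN _ _] := minN i.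
by rewrite -submx0 -(minimal_ideal_cap minM (minN i) (MN i)) sub_capmx
  (iM w _ wM).2 (iN _ w (submxMl _ _)).1.
Qed.

Section FrobeniusChain.
Variable N : nat -> 'M[K]_m.
Hypotheses (minN : forall i, minimal_ideal (N i))
  (frobN : forall i, (N i.+1 <= frob 1 (N i))%MS).

Lemma frob_chain_sub i : (N i <= frob i (N 0%N))%MS.
Proof.
elim: i => [|i IH].
  by have -> : frob 0 (N 0%N) = N 0%N by apply/matrixP => r s; rewrite mxE qfrob0.
by apply: submx_trans (frobN i) _; rewrite -[i.+1]add1n -frob_comp map_submx.
Qed.

Lemma frob_chain_repeat : exists a b, (a < b)%N /\ (N b == N a)%MS.
Proof.
apply: NNPP => noRep.
suff rk t : (t <= m)%N -> (t < \rank (\sum_(i < t.+1) N i))%N.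
  by have := rk m (leqnn m); rewrite ltnNge rank_leq_col.
elim: t => [_|t IH tm]; first by rewrite big_ord1 lt0n mxrank_eq0; case: (minN 0).
rewrite big_ord_recr /=.
have nsub : ~~ (N t.+1 <= \sum_(i < t.+1) N i)%MS.
  apply: (minimal_ideal_not_sub_sum (N := fun i : 'I_t.+1 => N i)) => // i.
  by apply/negP => Ni; apply: noRep; exists i, t.+1.
have : (\sum_(i < t.+1) N i < \sum_(i < t.+1) N i + N t.+1)%MS.
  by rewrite ltmxE addsmxSl; apply: contra nsub; apply: submx_trans (addsmxSr _ _).
by rewrite ltmxErank => /andP[_]; apply: leq_ltn_trans (IH (ltnW tm)).
Qed.

(* Two distinct minimal ideals meet in 0, and so do their Frobenius images. *)
Lemma frob_chain_shift a b : (a < b)%N -> (N b == N a)%MS -> (N (b - a) == N 0%N)%MS.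
Proof.
elim: a b => [|a IH] [|b] //.
rewrite ltnS subSS => ab Nba; apply: IH => //; apply: contraT => nNba.
have : (N a.+1 <= frob 1 (N b) :&: frob 1 (N a))%MS.
  by rewrite sub_capmx frobN andbT; apply: submx_trans (frobN b); case/andP: Nba.
rewrite -map_capmx (minimal_ideal_cap (minN b) (minN a) nNba) map_mx0 submx0.
by case: (minN a.+1) => _ /negbTE ->.
Qed.

Lemma frob_chain_rational : exists2 c : 'rV[F]_m, c != 0 & (map_mx f c <= N 0%N)%MS.
Proof.
have [a [b [ab Nba]]] := frob_chain_repeat.
have d_gt0 : (0 < b - a)%N by rewrite subn_gt0.
have sub0 : (N 0%N <= frob (b - a) (N 0%N))%MS.
  by apply: submx_trans (frob_chain_sub _); case/andP: (frob_chain_shift ab Nba).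
have sfrob : (frob (b - a) (N 0%N) <= N 0%N)%MS.
  by rewrite -(mxrank_leqif_sup sub0).2 mxrank_map.
by apply: (frob_stable_rational hconst d_gt0 sfrob); case: (minN 0).
Qed.

End FrobeniusChain.

(* Some minimal ideal inside U has a Frobenius chain, whose start is rational. *)
Lemma sc_ideal_irrational_eq0 U : sc_ideal U ->
  (forall c : 'rV[F]_m, (map_mx f c <= U)%MS -> c = 0) -> U = 0.
Proof.
move=> iU Urat; apply/eqP; apply: contraT => U_neq0.
have [M minM MU] := exists_minimal_ideal iU U_neq0.
have [N [N0 minN frobN]] := minimal_frob_chain minM.
have [c c_neq0 cN] := frob_chain_rational minN frobN.
by rewrite (Urat c) ?eqxx // in c_neq0; apply: submx_trans MU; rewrite -N0.
Qed.

End Semiprime.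

End ScalarExtension.

(** * Spans of sets of matrices *)

Lemma rowspace_of_subspace (L : fieldType) k (P : 'rV[L]_k -> Prop) : P 0 ->
  (forall x y, P x -> P y -> P (x + y)) -> (forall a x, P x -> P (a *: x)) ->
  exists U : 'M[L]_k, forall x, (x <= U)%MS <-> P x.
Proof.
move=> P0 PD PZ.
suff grow j (U : 'M[L]_k) : (k - \rank U <= j)%N -> (forall x, (x <= U)%MS -> P x) ->
    exists V : 'M[L]_k, forall x, (x <= V)%MS <-> P x.
  by apply: (grow k 0); [rewrite leq_subr | move=> x; rewrite submx0 => /eqP ->].
elim: j U => [|j IH] U rkU PU.
  exists U => x; split=> [/PU //|_]; apply: submx_full.
  by rewrite /row_full eqn_leq rank_leq_col; move: rkU; lia.
have [[c [Pc cU]]|] := classic (exists c, P c /\ ~~ (c <= U)%MS); last first.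
  move=> noc; exists U => x; split=> [/PU //|Px].
  by apply/negPn/negP => xU; apply: noc; exists x.
apply: (IH (U + c)%MS).
  have : (U < U + c)%MS.
    by rewrite ltmxE addsmxSl; apply: contra cU; apply: submx_trans (addsmxSr U c).
  by rewrite ltmxErank => /andP[_]; move: rkU (rank_leq_col (U + c)%MS); lia.
move=> x /sub_addsmxP [u ->]; apply: PD; first by apply: PU; exact: submxMl.
by rewrite [u.2]mx11_scalar mul_scalar_mx; apply: PZ.
Qed.

Section MatrixSpans.
Variables (K : fieldType) (n : nat).

Lemma nilpotent_setP (S : mset K n) :
  nilpotent_set S <-> exists k, vanishing_products (@mulmx K n n n) S k.
Proof.
split=> [[k nS]|[k nS]].
  exists k => z l sl Sz Sl; pose s := rcons l z.
  have ss : size s = k.+1 by rewrite size_rcons sl.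
  have Ss (i : 'I_k.+1) : S (nth z s i).
    have : nth z s i \in s by rewrite mem_nth // ss.
    by rewrite mem_rcons inE => /orP[/eqP->|/Sl].
  have Es : [seq nth z s i | i : 'I_k.+1 <- enum 'I_k.+1] = s.
    have -> : [seq nth z s i | i : 'I_k.+1 <- enum 'I_k.+1] =
              map (nth z s) (map val (enum 'I_k.+1)) by rewrite -map_comp.
    by rewrite val_enum_ord -ss map_nth_iota0 // take_size.
  by have := nS _ Ss; rewrite Es foldr_rcons mulmx1.
exists k => v Sv; have : size [seq v i | i <- enum 'I_k.+1] = k.+1.
  by rewrite size_map size_enum_ord.
have : forall x, x \in [seq v i | i <- enum 'I_k.+1] -> S x by move=> x /mapP [i _ ->].
case/lastP: [seq v i | i <- enum 'I_k.+1] => // l z Sl; rewrite size_rcons => -[sl].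
rewrite foldr_rcons mulmx1; apply: nS => //.
  by apply: Sl; rewrite mem_rcons mem_head.
by move=> x xl; apply: Sl; rewrite mem_rcons inE xl orbT.
Qed.

Lemma K_span0 (S : mset K n) : K_span S 0.
Proof. by exists 0%N, (fun _ => 0), (fun _ => 0); split; [case | rewrite big_ord0]. Qed.

Lemma K_spanD (S : mset K n) A C : K_span S A -> K_span S C -> K_span S (A + C).
Proof.
move=> [t1 [a1 [v1 [Sv1 ->]]]] [t2 [a2 [v2 [Sv2 ->]]]].
pose cat T (h1 : 'I_t1 -> T) (h2 : 'I_t2 -> T) (i : 'I_(t1 + t2)) :=
  match split i with inl j => h1 j | inr j => h2 j end.
exists (t1 + t2)%N, (cat _ a1 a2), (cat _ v1 v2); split.
  by move=> i; rewrite /cat; case: split.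
rewrite big_split_ord; congr (_ + _); apply: eq_bigr => i _.
  by rewrite /cat (unsplitK (inl i : 'I_t1 + 'I_t2)).
by rewrite /cat (unsplitK (inr i : 'I_t1 + 'I_t2)).
Qed.

Lemma K_spanZ (S : mset K n) c A : K_span S A -> K_span S (c *: A).
Proof.
move=> [t [a [v [Sv ->]]]]; exists t, (fun i => c * a i), v; split=> //.
by rewrite scaler_sumr; apply: eq_bigr => i _; rewrite scalerA.
Qed.

Lemma K_span_sum (S : mset K n) t (G : 'I_t -> 'M[K]_n) :
  (forall i, K_span S (G i)) -> K_span S (\sum_(i < t) G i).
Proof. by move=> SG; elim/big_ind: _ => //; [exact: K_span0 | exact: K_spanD]. Qed.

Lemma K_span_sub (S : mset K n) A : S A -> K_span S A.
Proof.
by move=> SA; exists 1%N, (fun _ => 1), (fun _ => A); rewrite big_ord1 scale1r.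
Qed.

Lemma K_span_mull (S : mset K n) X A :
  (forall v, S v -> S (X *m v)) -> K_span S A -> K_span S (X *m A).
Proof.
move=> SX [t [a [v [Sv ->]]]]; exists t, a, (fun i => X *m v i); split=> [i|].
  exact: SX.
by rewrite mulmx_sumr; apply: eq_bigr => i _; rewrite scalemxAr.
Qed.

Lemma K_span_mulr (S : mset K n) X A :
  (forall v, S v -> S (v *m X)) -> K_span S A -> K_span S (A *m X).
Proof.
move=> SX [t [a [v [Sv ->]]]]; exists t, a, (fun i => v i *m X); split=> [i|].
  exact: SX.
by rewrite mulmx_suml; apply: eq_bigr => i _; rewrite scalemxAl.
Qed.

Lemma nilpotent_K_span (S : mset K n) : nilpotent_set S -> nilpotent_set (K_span S).
Proof.
move=> /nilpotent_setP [k nS]; apply/nilpotent_setP; exists k.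
exact: (vanishing_products_span (@mulmxDl K n n n) (@mulmxDr K n n n)
  (fun a x y => esym (scalemxAl a x y)) (fun a x y => esym (scalemxAr a x y)) nS).
Qed.

Variable s : seq 'M[K]_n.

Definition kcomb (c : 'rV[K]_(size s)) := \sum_(i < size s) c 0 i *: s`_i.

Lemma kcomb_is_linear : linear kcomb.
Proof.
move=> a x y; rewrite /kcomb scaler_sumr -big_split; apply: eq_bigr => i _.
by rewrite !mxE scalerDl scalerA.
Qed.

HB.instance Definition _ :=
  GRing.isLinear.Build K 'rV[K]_(size s) 'M[K]_n _ kcomb kcomb_is_linear.

Lemma kcomb_delta i : kcomb (delta_mx 0 i) = s`_i.
Proof.
rewrite /kcomb (bigD1 i) //= big1 ?addr0; first by rewrite mxE !eqxx scale1r.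
by move=> j ji; rewrite mxE (negbTE ji) andbF scale0r.
Qed.

Lemma K_spannedE A : K_spanned s A <-> exists c, A = kcomb c.
Proof.
split=> [[c ->]|[c ->]]; last by exists (fun i => c 0 i).
by exists (\row_i c i); apply: eq_bigr => i _; rewrite mxE.
Qed.

Lemma K_freeP : (forall c, kcomb c = 0 -> c = 0) -> K_free s.
Proof.
move=> kcomb_inj c c0 i.
have : kcomb (\row_i c i) = 0 by rewrite -[RHS]c0; apply: eq_bigr => j _; rewrite mxE.
by move=> /kcomb_inj /rowP /(_ i); rewrite !mxE.
Qed.

End MatrixSpans.

Arguments kcomb {K n} s c.

Section FCombinations.
Variables (F : finFieldType) (K : fieldType) (f : {rmorphism F -> K}) (n : nat)
  (s : seq 'M[K]_n).
Local Notation fcomb c := (kcomb s (map_mx f c)).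

Lemma F_spanE A : F_span f s A <-> exists c, A = fcomb c.
Proof.
split=> [[c ->]|[c ->]].
  by exists (\row_i c i); apply: eq_bigr => i _; rewrite !mxE.
by exists (fun i => c 0 i); apply: eq_bigr => i _; rewrite mxE.
Qed.

Lemma F_free_inj : F_free f s -> forall c, fcomb c = 0 -> c = 0.
Proof.
move=> s_free c c0; apply/rowP => i; rewrite mxE.
apply: (s_free (fun i => c 0 i)) => //.
by rewrite -[RHS]c0; apply: eq_bigr => j _; rewrite mxE.
Qed.

End FCombinations.

Lemma F_dim_subspace (F : finFieldType) (K : fieldType) (f : {rmorphism F -> K}) n
  (B S : mset K n) d : F_subspace f S -> (forall A, S A -> B A) ->
  F_dim_is f B d -> exists d', F_dim_is f S d'.
Proof.
move=> [S0 SD SZ] SB [sB [_ sB_free sB_span]].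
pose sF (v : 'rV[F]_(size sB)) := kcomb sB (map_mx f v).
have [U HU] : exists U : 'M[F]_(size sB), forall v, (v <= U)%MS <-> S (sF v).
  apply: rowspace_of_subspace => [|v w|a v]; rewrite /sF ?map_mx0 ?map_mxD ?map_mxZ.
  - by rewrite linear0.
  - by rewrite linearD; apply: SD.
  - by rewrite linearZ; apply: SZ.
pose bs := [seq sF (row i (row_base U)) | i <- enum 'I_(\rank U)].
have size_bs : size bs = \rank U by rewrite size_map size_enum_ord.
have bsE (c : 'I_(\rank U) -> F) :
    \sum_(i < \rank U) f (c i) *: bs`_i = sF (\row_i c i *m row_base U).
  rewrite mulmx_sum_row /sF map_mx_sum linear_sum; apply: eq_bigr => i _.
  by rewrite (nth_map i) ?size_enum_ord // nth_ord_enum map_mxZ linearZ mxE.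
exists (\rank U), bs; split=> //.
  rewrite /F_free size_bs => c /eqP; rewrite bsE.
  move=> /eqP /(F_free_inj sB_free) /eqP; rewrite mulmx_free_eq0 ?row_base_free //.
  by move=> /eqP /rowP c0 i; have := c0 i; rewrite !mxE.
move=> A; rewrite /F_span size_bs; split=> [SA|[c ->]]; last first.
  by rewrite bsE; apply/HU; rewrite -(eq_row_base U) submxMl.
have [v Ev] := (F_spanE f sB A).1 ((sB_span A).1 (SB A SA)).
have /submxP [u Eu] : (v <= row_base U)%MS by rewrite eq_row_base HU /sF -Ev.
exists (fun i => u 0 i); rewrite bsE Ev Eu; congr sF.
by congr (_ *m _); apply/rowP => i; rewrite mxE.
Qed.

Lemma nilpotent_set_sub (K : fieldType) n (S T : mset K n) :
  (forall A, S A -> T A) -> nilpotent_set T -> nilpotent_set S.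
Proof. by move=> ST [k nT]; exists k => v Sv; apply: nT => i; apply: ST. Qed.

(** * The complement of the radical *)

Section RadicalComplement.
Variables (F : finFieldType) (K : fieldType) (f : {rmorphism F -> K}) (n : nat)
  (B B' R : mset K n).
Hypotheses (hB : F_subalgebra f B) (hR : jacobson_radical f B R)
  (hB' : F_subalgebra f B')
  (hdec : forall A, B A <-> exists X Y, [/\ B' X, R Y & A = X + Y])
  (hcap : forall A, B' A -> R A -> A = 0).

Lemma B'_sub_B A : B' A -> B A.
Proof.
move=> B'A; apply/hdec; exists A, 0; rewrite addr0; split=> //.
by have [[[]]] := hR.
Qed.

Section B'Ideal.
Variable I : mset K n.
Hypotheses (I_subspace : F_subspace f I) (IB' : forall A, I A -> B' A)
  (IM : forall X A, B' X -> I A -> I (X *m A) /\ I (A *m X)).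

Lemma sum_set_ideal : two_sided_ideal f B (sum_set I R).
Proof.
have [I0 ID IZ] := I_subspace; have [[[R0 RD RZ] RB RMl RMr] _ _] := hR.
split.
- split; first by exists 0, 0; rewrite addr0.
    move=> _ _ [a [r [Ia Rr ->]]] [a' [r' [Ia' Rr' ->]]].
    by exists (a + a'), (r + r'); rewrite addrACA; split; [exact: ID | exact: RD |].
  move=> c _ [a [r [Ia Rr ->]]]; exists (f c *: a), (f c *: r).
  by rewrite scalerDr; split; [exact: IZ | exact: RZ |].
- by move=> _ [a [r [Ia Rr ->]]]; apply/hdec; exists a, r; split=> //; exact: IB'.
- move=> _ _ /hdec [x [y [B'x Ry ->]]] [a [r [Ia Rr ->]]].
  exists (x *m a), (x *m r + y *m a + y *m r); split.
  + exact: (IM B'x Ia).1.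
  + apply: (RD); last exact: RMl (RB _ Ry) Rr.
    by apply: (RD); [exact: RMl (B'_sub_B B'x) Rr | exact: RMr (B'_sub_B (IB' Ia)) Ry].
  + by rewrite mulmxDl !mulmxDr !addrA.
- move=> _ _ /hdec [x [y [B'x Ry ->]]] [a [r [Ia Rr ->]]].
  exists (a *m x), (a *m y + r *m x + r *m y); split.
  + exact: (IM B'x Ia).2.
  + apply: (RD); last exact: RMr (RB _ Ry) Rr.
    by apply: (RD); [exact: RMl (B'_sub_B (IB' Ia)) Ry | exact: RMr (B'_sub_B B'x) Rr].
  + by rewrite mulmxDr !mulmxDl -!addrA; congr (_ + _); rewrite addrCA.
Qed.

(* I + R is a nilpotent ideal of B, hence lies in R, and I lies in B' :&: R = 0. *)
Lemma nilpotent_B'_ideal_eq0 : nilpotent_set I -> forall A, I A -> A = 0.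
Proof.
move=> nI A IA; have [[[R0 RD _] RB RMl RMr] nR maxR] := hR.
have [k1 nI'] := (nilpotent_setP I).1 nI; have [k2 nR'] := (nilpotent_setP R).1 nR.
have nIR : nilpotent_set (sum_set I R).
  apply/nilpotent_setP; exists (k1 + k2 * k1.+1)%N.
  exact: (vanishing_products_sum_set (@mulmxDl K n n n) (@mulmxDr K n n n)
    (@mulmxA K n n n n) hB.2 (fun X IX => B'_sub_B (IB' IX)) RB RD RMl RMr nI' nR').
have RA : R A.
  by apply: (maxR _ sum_set_ideal nIR); exists A, 0; rewrite addr0.
exact: hcap (IB' IA) RA.
Qed.

End B'Ideal.
Lemma R_mul_B' X A : B' X -> R A -> R (X *m A) /\ R (A *m X).
Proof.
have [[_ _ RMl RMr] _ _] := hR.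
by move=> /B'_sub_B BX RA; split; [exact: RMl | exact: RMr].
Qed.

Lemma B'_cap_K_span_R A : B' A -> K_span R A -> A = 0.
Proof.
have [[B'0 B'D B'Z] B'M] := hB'; have [_ nR _] := hR.
move=> B'A KRA.
apply: (@nilpotent_B'_ideal_eq0 (fun A => B' A /\ K_span R A)) (conj B'A KRA).
- split; first by split; [exact: B'0 | exact: K_span0].
    by move=> X Y [B'X KRX] [B'Y KRY]; split; [exact: B'D | exact: K_spanD].
  by move=> c X [B'X KRX]; split; [exact: B'Z | exact: K_spanZ].
- by move=> X [].
- move=> X Y B'X [B'Y KRY]; split; split; [exact: B'M | | exact: B'M |].
    by apply: K_span_mull KRY => v /(R_mul_B' B'X) [].
  by apply: K_span_mulr KRY => v /(R_mul_B' B'X) [].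
by apply: nilpotent_set_sub (nilpotent_K_span nR) => X [].
Qed.

End RadicalComplement.

Section Coordinates.
Variables (F : finFieldType) (K : fieldType) (f : {rmorphism F -> K}) (n : nat)
  (B' : mset K n) (bs : seq 'M[K]_n).
Hypotheses (hB' : F_subalgebra f B') (bs_free : F_free f bs)
  (bs_span : forall A, B' A <-> F_span f bs A).
Local Notation m := (size bs).
Local Notation fcomb c := (kcomb bs (map_mx f c)).

Lemma B'_fcomb c : B' (fcomb c).
Proof. by apply/bs_span/F_spanE; exists c. Qed.

Lemma fcomb_B' A : B' A -> exists c, A = fcomb c.
Proof. by move=> /bs_span /F_spanE. Qed.

Lemma B'_nth (i : 'I_m) : B' bs`_i.
Proof. by have := B'_fcomb (delta_mx 0 i); rewrite map_delta_mx kcomb_delta. Qed.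

Lemma struct_const_ex (i j : 'I_m) : exists c, bs`_i *m bs`_j == fcomb c.
Proof. by have [c ->] := fcomb_B' (hB'.2 _ _ (B'_nth i) (B'_nth j)); exists c. Qed.

Definition struct_const (i j : 'I_m) := xchoose (struct_const_ex i j).

Lemma struct_constE (i j : 'I_m) : bs`_i *m bs`_j = fcomb (struct_const i j).
Proof. exact/eqP/(xchooseP (struct_const_ex i j)). Qed.

Local Notation mulK := (scmul (fun i j => map_mx f (struct_const i j))).

Lemma kcomb_scmul x y : kcomb bs (mulK x y) = kcomb bs x *m kcomb bs y.
Proof.
rewrite /scmul linear_sum /kcomb mulmx_suml; apply: eq_bigr => i _.
rewrite linear_sum -scalemxAl mulmx_sumr scaler_sumr; apply: eq_bigr => j _.
by rewrite linearZ -scalemxAr struct_constE scalerA.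
Qed.

Lemma struct_constA : associative (scmul struct_const).
Proof.
move=> x y z; apply/eqP; rewrite -subr_eq0; apply/eqP/(F_free_inj bs_free).
by rewrite !map_mxD !map_mxN linearB /= !map_scmul !kcomb_scmul mulmxA subrr.
Qed.

Lemma kcomb_foldr z l :
  kcomb bs (foldr mulK z l) = foldr (@mulmx K n n n) (kcomb bs z) (map (kcomb bs) l).
Proof. by elim: l => //= x l <-; rewrite kcomb_scmul. Qed.

Lemma kcomb_mul_K_span (S : mset K n) y A :
  (forall X v, B' X -> S v -> S (X *m v) /\ S (v *m X)) -> K_span S A ->
  K_span S (kcomb bs y *m A) /\ K_span S (A *m kcomb bs y).
Proof.
move=> SB' SA; rewrite /kcomb mulmx_suml mulmx_sumr; split; apply: K_span_sum => i.
  rewrite -scalemxAl; apply: K_spanZ; apply: K_span_mull SA => v Sv.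
  exact: (SB' _ _ (B'_nth i) Sv).1.
rewrite -scalemxAr; apply: K_spanZ; apply: K_span_mulr SA => v Sv.
exact: (SB' _ _ (B'_nth i) Sv).2.
Qed.

Lemma K_span_B'E A : K_span B' A <-> exists c, A = kcomb bs c.
Proof.
split=> [[t [a [v [B'v ->]]]]|[c ->]]; last first.
  by apply: K_span_sum => i; apply/K_spanZ/K_span_sub/B'_nth.
have cv i : exists c, v i == fcomb c by have [c ->] := fcomb_B' (B'v i); exists c.
pose c i := xchoose (cv i); have Ev i : v i = fcomb (c i) := eqP (xchooseP (cv i)).
exists (\sum_i a i *: map_mx f (c i)); rewrite linear_sum.
by apply: eq_bigr => i _; rewrite Ev linearZ.
Qed.

End Coordinates.

Section KeyLemma.
Variables (F : finFieldType) (K : fieldType) (f : {rmorphism F -> K}) (n : nat)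
  (B B' R : mset K n) (bs : seq 'M[K]_n).
Hypotheses (hconst : full_constant_field f)
  (hB : F_subalgebra f B) (hR : jacobson_radical f B R) (hB' : F_subalgebra f B')
  (hdec : forall A, B A <-> exists X Y, [/\ B' X, R Y & A = X + Y])
  (hcap : forall A, B' A -> R A -> A = 0)
  (bs_free : F_free f bs) (bs_span : forall A, B' A <-> F_span f bs A).
Local Notation g := (struct_const hB' bs_span).
Local Notation fcomb c := (kcomb bs (map_mx f c)).

(* A nilpotent ideal of B' (x) K meets B' in a nilpotent ideal of B', which is 0. *)
Lemma sc_nilpotent_irrational N : sc_ideal f g N -> sc_nilpotent f g N ->
  forall c : 'rV[F]_(size bs), (map_mx f c <= N)%MS -> c = 0.
Proof.
move=> iN [k nN] c cN; apply: (F_free_inj bs_free).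
pose I A := exists2 c, (map_mx f c <= N)%MS & A = fcomb c.
apply: (@nilpotent_B'_ideal_eq0 _ _ _ _ _ _ _ hB hR hdec hcap I); last by exists c.
- split; first by exists 0; rewrite map_mx0 ?sub0mx ?linear0.
    move=> _ _ [c1 c1N ->] [c2 c2N ->].
    by exists (c1 + c2); rewrite map_mxD ?addmx_sub ?linearD.
  by move=> a _ [c1 c1N ->]; exists (a *: c1); rewrite map_mxZ ?scalemx_sub ?linearZ.
- by move=> _ [c1 _ ->]; exact: B'_fcomb.
- move=> _ _ /(fcomb_B' bs_span) [d ->] [c1 c1N ->].
  have [c1dN dc1N] := iN _ (map_mx f d) c1N.
  by split; [exists (scmul g d c1) | exists (scmul g c1 d)];
    rewrite map_scmul ?kcomb_scmul.
apply/nilpotent_setP; exists k => _ l sl [cz czN ->] lI.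
have [l' l'N El] :
    exists2 l', (forall x, x \in l' -> (x <= N)%MS) & l = map (kcomb bs) l'.
  by apply: seq_preimage => _ /lI [c1 c1N ->]; exists (map_mx f c1).
have sl' : size l' = k by rewrite -sl El size_map.
by rewrite El -(kcomb_foldr hB' bs_span) nN ?linear0.
Qed.

Lemma kcomb_K_span_R_eq0 c : K_span R (kcomb bs c) -> c = 0.
Proof.
have [U HU] : exists U : 'M[K]_(size bs),
    forall x, (x <= U)%MS <-> K_span R (kcomb bs x).
  apply: rowspace_of_subspace => [|x y|a x]; rewrite ?linear0 ?linearD ?linearZ.
  - exact: K_span0.
  - exact: K_spanD.
  - exact: K_spanZ.
have iU : sc_ideal f g U.
  move=> x y /HU KRx.
  have [KRyx KRxy] := kcomb_mul_K_span bs_span y (R_mul_B' hR hdec) KRx.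
  by split; apply/HU; rewrite kcomb_scmul.
have Urat (c0 : 'rV[F]_(size bs)) : (map_mx f c0 <= U)%MS -> c0 = 0.
  move=> /HU KRc0; apply: (F_free_inj bs_free).
  by apply: (B'_cap_K_span_R hB hR hB' hdec hcap) KRc0; apply: B'_fcomb.
have U0 := sc_ideal_irrational_eq0 (struct_constA hB' bs_free bs_span) hconst
  sc_nilpotent_irrational iU Urat.
by move=> /HU; rewrite U0 submx0 => /eqP.
Qed.

End KeyLemma.

Theorem proposition3p2 (F : finFieldType) (K : fieldType) (f : {rmorphism F -> K})
  (hK : function_field_one_var f) (hconst : full_constant_field f)
  (n : nat) (B B' R : mset K n) :
  F_subalgebra f B -> (exists d, F_dim_is f B d) ->
  jacobson_radical f B R ->
  F_subalgebra f B' ->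
  (forall A, B A <-> exists X Y, [/\ B' X, R Y & A = X + Y]) ->
  (forall A, B' A -> R A -> A = 0) ->
  (exists d, F_dim_is f B' d /\ K_dim_is (K_span B') d) /\
  (forall A, K_span B' A -> K_span R A -> A = 0).
Proof.
move=> hB [d hd] hR hB' hdec hcap.
have [_ [bs [_ bs_free bs_span]]] := F_dim_subspace hB'.1 (B'_sub_B hR hdec) hd.
have KR_eq0 := kcomb_K_span_R_eq0 hconst hB hR hB' hdec hcap bs_free bs_span.
split; last first.
  by move=> A /(K_span_B'E bs_span) [c ->] /KR_eq0 ->; rewrite linear0.
exists (size bs); split; first by exists bs.
exists bs; split=> //.
  by apply: K_freeP => c c0; apply: KR_eq0; rewrite c0; exact: K_span0.
by move=> A; rewrite K_spannedE; exact: K_span_B'E.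
Qed.
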